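(* Consider hexahedra $p=(p_1,\ldots,p_8)\in(\mathbf{R}^3)^8$ with faces given by the vertex cycles $(1,2,3,4)$, $(5,6,7,8)$ and $(i,i+1,i+5,i+4)$ for $i=1,2,3$ and $(4,1,5,8)$ (so the edges are those of the two cycles $1234$, $5678$ and the edges $\{i,i+4\}$), and the gradient vector field $$Y_p=\tfrac12\begin{pmatrix}\nu(3,6,8)+\nu(2,5,4)+\nu(6,5,8,4,3,2)\\ \nu(4,7,5)+\nu(3,6,1)+\nu(7,6,5,1,4,3)\\ \nu(1,8,6)+\nu(4,7,2)+\nu(8,7,6,2,1,4)\\ \nu(2,5,7)+\nu(1,8,3)+\nu(5,8,7,3,2,1)\\ \nu(2,7,4)+\nu(1,6,8)+\nu(6,7,8,4,1,2)\\ \nu(3,8,1)+\nu(2,7,5)+\nu(7,8,5,1,2,3)\\ \nu(4,5,2)+\nu(3,8,6)+\nu(8,5,6,2,3,4)\\ \nu(1,6,3)+\nu(4,5,7)+\nu(5,6,7,3,4,1)\end{pmatrix}.$$ Then every $Y$-optimal $p$ is a cube, i.e. $p_1,\ldots,p_8$ are the vertices of a cube whose faces are the six vertex cycles listed above.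
   Context: Notation: $\nu(i_1,\ldots,i_k)=p_{i_1}\times p_{i_2}+\cdots+p_{i_{k-1}}\times p_{i_k}+p_{i_k}\times p_{i_1}$. A configuration $p\in(\mathbf{R}^3)^n$ (not all points equal) is called $Y$-optimal if there exist $q=\mu p+(c,\ldots,c)$ with $\mu>0$, $c\in\mathbf{R}^3$, and a real number $\lambda\neq0$ such that $Y_q=\lambda q$. *)

From HB Require Import structures.
From mathcomp Require Import all_boot all_order all_algebra.
From mathcomp Require Import reals.
Set Implicit Arguments. Unset Strict Implicit. Unset Printing Implicit Defensive.
Import Order.TTheory GRing.Theory Num.Theory.
Local Open Scope ring_scope.

Section Hexa.
Variable R : realType.

Notation vec := 'rV[R]_3.

Definition cx (a : vec) : R := a ord0 (inord 0).
Definition cy (a : vec) : R := a ord0 (inord 1).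
Definition cz (a : vec) : R := a ord0 (inord 2).

Definition cross (a b : vec) : vec :=
  \row_(k < 3)
    (if (k : nat) == 0%N then cy a * cz b - cz a * cy b
     else if (k : nat) == 1%N then cz a * cx b - cx a * cz b
     else cx a * cy b - cy a * cx b).

Definition dot (a b : vec) : R := \sum_(k < 3) a ord0 k * b ord0 k.

(* A configuration of 8 points, indexed 0..7; vertex number k (1-based, as in
   the paper) is  pt p k = p (k-1). *)
Definition pt (p : 'I_8 -> vec) (k : nat) : vec := p (inord k.-1).

(* nu(i_1,...,i_k) = p_{i1} x p_{i2} + ... + p_{i(k-1)} x p_{ik} + p_{ik} x p_{i1} *)
Fixpoint nu_aux (p : 'I_8 -> vec) (first cur : nat) (rest : seq nat) : vec :=
  match rest with
  | [::] => cross (pt p cur) (pt p first)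
  | y :: r => cross (pt p cur) (pt p y) + nu_aux p first y r
  end.

Definition nu (p : 'I_8 -> vec) (s : seq nat) : vec :=
  match s with
  | [::] => 0
  | a :: r => nu_aux p a a r
  end.

Definition Yrow (p : 'I_8 -> vec) (k : nat) : vec :=
  (1/2 : R) *:
  match k with
  | 1 => nu p [:: 3; 6; 8] + nu p [:: 2; 5; 4] + nu p [:: 6; 5; 8; 4; 3; 2]
  | 2 => nu p [:: 4; 7; 5] + nu p [:: 3; 6; 1] + nu p [:: 7; 6; 5; 1; 4; 3]
  | 3 => nu p [:: 1; 8; 6] + nu p [:: 4; 7; 2] + nu p [:: 8; 7; 6; 2; 1; 4]
  | 4 => nu p [:: 2; 5; 7] + nu p [:: 1; 8; 3] + nu p [:: 5; 8; 7; 3; 2; 1]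
  | 5 => nu p [:: 2; 7; 4] + nu p [:: 1; 6; 8] + nu p [:: 6; 7; 8; 4; 1; 2]
  | 6 => nu p [:: 3; 8; 1] + nu p [:: 2; 7; 5] + nu p [:: 7; 8; 5; 1; 2; 3]
  | 7 => nu p [:: 4; 5; 2] + nu p [:: 3; 8; 6] + nu p [:: 8; 5; 6; 2; 3; 4]
  | 8 => nu p [:: 1; 6; 3] + nu p [:: 4; 5; 7] + nu p [:: 5; 6; 7; 3; 4; 1]
  | _ => 0
  end.

Definition Y (p : 'I_8 -> vec) : 'I_8 -> vec := fun i => Yrow p i.+1.

Definition Y_optimal (p : 'I_8 -> vec) : Prop :=
  (exists i j : 'I_8, p i != p j) /\
  exists (mu : R) (c : vec) (lambda : R),
    0 < mu /\ lambda != 0 /\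
    let q := fun i => mu *: p i + c in
    forall i : 'I_8, Y q i = lambda *: q i.

(* p_1..p_8 are the vertices of a cube whose faces are the vertex cycles
   1234, 5678, (i,i+1,i+5,i+4) for i=1,2,3, and 4158:
   there is a centre c and three pairwise orthogonal nonzero vectors u v w of
   equal length with p_k = c +- u +- v +- w in the pattern below. *)
Definition is_cube (p : 'I_8 -> vec) : Prop :=
  exists (c u v w : vec),
    u != 0 /\ dot u v = 0 /\ dot v w = 0 /\ dot u w = 0 /\
    dot u u = dot v v /\ dot v v = dot w w /\
    pt p 1 = c - u - v - w /\
    pt p 2 = c + u - v - w /\
    pt p 3 = c + u + v - w /\
    pt p 4 = c - u + v - w /\
    pt p 5 = c - u - v + w /\
    pt p 6 = c + u - v + w /\
    pt p 7 = c + u + v + w /\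
    pt p 8 = c - u + v + w.

End Hexa.

(* Label the vertices by their sign vectors (su k, sv k, sw k) in {-1,1}^3 and
   expand a configuration in the corresponding Walsh basis: the "modes"
   U = sum_k su k p_k, V, W, the barycentre and four mixed modes.  A direct
   computation shows that the mixed modes of Y_p vanish and that its U-, V- and
   W-modes are V x W, W x U and U x V.  Hence for a Y-optimal configuration the mixed modes
   vanish, so p_k = c + su k U/8 + sv k V/8 + sw k W/8, and V x W = k U,
   W x U = k V, U x V = k W for some k <> 0.  These cross-product relations force
   U, V, W to be pairwise orthogonal of equal length (k |U|^2 is the triple
   product det(U,V,W), and so are k |V|^2 and k |W|^2), and U <> 0 since otherwise
   all eight points would coincide. *)
From mathcomp Require Import all_boot all_order all_algebra.
From mathcomp Require Import reals.
From mathcomp Require Import ring.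
Set Implicit Arguments. Unset Strict Implicit. Unset Printing Implicit Defensive.
Import Order.TTheory GRing.Theory Num.Theory.
Local Open Scope ring_scope.

Section Hexahedron.
Variable R : realType.
Notation vec := 'rV[R]_3.
Notation config := ('I_8 -> vec).
Implicit Types (a b d : vec) (p Q : config).

Lemma cxD a b : cx (a + b) = cx a + cx b. Proof. by rewrite /cx !mxE. Qed.
Lemma cyD a b : cy (a + b) = cy a + cy b. Proof. by rewrite /cy !mxE. Qed.
Lemma czD a b : cz (a + b) = cz a + cz b. Proof. by rewrite /cz !mxE. Qed.
Lemma cxZ (k : R) a : cx (k *: a) = k * cx a. Proof. by rewrite /cx !mxE. Qed.
Lemma cyZ (k : R) a : cy (k *: a) = k * cy a. Proof. by rewrite /cy !mxE. Qed.
Lemma czZ (k : R) a : cz (k *: a) = k * cz a. Proof. by rewrite /cz !mxE. Qed.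
Lemma cx0 : cx (0 : vec) = 0. Proof. by rewrite /cx !mxE. Qed.
Lemma cy0 : cy (0 : vec) = 0. Proof. by rewrite /cy !mxE. Qed.
Lemma cz0 : cz (0 : vec) = 0. Proof. by rewrite /cz !mxE. Qed.
Lemma cx_cross a b : cx (cross a b) = cy a * cz b - cz a * cy b.
Proof. by rewrite {1}/cx /cross !mxE inordK. Qed.
Lemma cy_cross a b : cy (cross a b) = cz a * cx b - cx a * cz b.
Proof. by rewrite {1}/cy /cross !mxE inordK. Qed.
Lemma cz_cross a b : cz (cross a b) = cx a * cy b - cy a * cx b.
Proof. by rewrite {1}/cz /cross !mxE inordK. Qed.

Definition coordE := (cxD, cyD, czD, cxZ, cyZ, czZ,
  cx0, cy0, cz0, cx_cross, cy_cross, cz_cross).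

Lemma dotE a b : dot a b = cx a * cx b + cy a * cy b + cz a * cz b.
Proof.
rewrite /dot !big_ord_recl big_ord0 addr0 addrA /cx /cy /cz.
by congr (_ * _ + _ * _ + _ * _); congr (_ _ _); apply: val_inj; rewrite /= inordK.
Qed.

Lemma vec_eq a b : cx a = cx b -> cy a = cy b -> cz a = cz b -> a = b.
Proof.
move=> ex ey ez; apply/rowP => -[[|[|[|//]]] lt_j3];
  [move: ex; rewrite /cx | move: ey; rewrite /cy | move: ez; rewrite /cz];
  by rewrite (_ : inord _ = Ordinal lt_j3) //; apply: val_inj; rewrite /= inordK.
Qed.

Ltac coords := apply: vec_eq; rewrite ?coordE.

Lemma cross0l a : cross 0 a = 0.
Proof. by coords; ring. Qed.

Lemma cross0r a : cross a 0 = 0.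
Proof. by coords; ring. Qed.

Lemma crossZ (k l : R) a b : cross (k *: a) (l *: b) = (k * l) *: cross a b.
Proof. by coords; ring. Qed.

Lemma dotZl (k : R) a b : dot (k *: a) b = k * dot a b.
Proof. by rewrite !dotE !coordE; ring. Qed.

Lemma dotZr (k : R) a b : dot a (k *: b) = k * dot a b.
Proof. by rewrite !dotE !coordE; ring. Qed.

Lemma dot_crossl a b : dot (cross a b) a = 0.
Proof. by rewrite !dotE !coordE; ring. Qed.

Lemma dot_crossr a b : dot (cross a b) b = 0.
Proof. by rewrite !dotE !coordE; ring. Qed.

Lemma dot_cross_cycle a b d : dot (cross a b) d = dot (cross b d) a.
Proof. by rewrite !dotE !coordE; ring. Qed.

Lemma scaler_eq0_cancel (k : R) a : k != 0 -> k *: a = 0 -> a = 0.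
Proof. by move=> k0 /eqP; rewrite scaler_eq0 (negPf k0) => /eqP. Qed.

Definition cross_frame (k : R) (u v w : vec) :=
  [/\ cross v w = k *: u, cross w u = k *: v & cross u v = k *: w].

Lemma cross_frame_orthogonal (k : R) (u v w : vec) : k != 0 -> cross_frame k u v w ->
  [/\ dot u v = 0, dot v w = 0, dot u w = 0, dot u u = dot v v
    & dot v v = dot w w].
Proof.
move=> k0 [eu ev ew]; split; apply: (mulfI k0); rewrite -!dotZl.
- by rewrite -eu dot_crossl mulr0.
- by rewrite -ev dot_crossl mulr0.
- by rewrite -eu dot_crossr mulr0.
- by rewrite -eu -ev dot_cross_cycle.
- by rewrite -ev -ew dot_cross_cycle.
Qed.

Lemma cross_frame_degenerate (k : R) (u v w : vec) : k != 0 -> cross_frame k u v w ->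
  u = 0 -> v = 0 /\ w = 0.
Proof.
move=> k0 [_ ev ew] u0; move: ev ew; rewrite u0 cross0l cross0r.
by move=> /esym/(scaler_eq0_cancel k0) -> /esym/(scaler_eq0_cancel k0).
Qed.

Lemma cross_frameZ (k mu : R) (u v w : vec) : mu != 0 ->
  cross_frame k (mu *: u) (mu *: v) (mu *: w) -> cross_frame (k / mu) u v w.
Proof.
move=> mu0 [eu ev ew]; split; apply: (can_inj (scalerK (mulf_neq0 mu0 mu0)));
  by rewrite /= -crossZ ?eu ?ev ?ew !scalerA; congr (_ *: _); field.
Qed.

(* Vertex k of the cube of is_cube is c + su k *: u + sv k *: v + sw k *: w. *)
Definition su (k : nat) : R := match k with 2 | 3 | 6 | 7 => 1 | _ => -1 end.
Definition sv (k : nat) : R := match k with 3 | 4 | 7 | 8 => 1 | _ => -1 end.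
Definition sw (k : nat) : R := match k with 5 | 6 | 7 | 8 => 1 | _ => -1 end.
Definition suv k := su k * sv k.
Definition svw k := sv k * sw k.
Definition suw k := su k * sw k.
Definition suvw k := su k * sv k * sw k.

Definition mode (s : nat -> R) Q : vec := \sum_(1 <= k < 9) s k *: pt Q k.

Lemma sum_1_to_8 (V : nmodType) (F : nat -> V) :
  \sum_(1 <= k < 9) F k = F 1%N + F 2%N + F 3%N + F 4%N + F 5%N + F 6%N + F 7%N + F 8%N.
Proof. by do 8 rewrite big_ltn //; rewrite big_geq // addr0 !addrA. Qed.

Lemma modeE s Q : mode s Q = s 1%N *: pt Q 1 + s 2%N *: pt Q 2 + s 3%N *: pt Q 3
  + s 4%N *: pt Q 4 + s 5%N *: pt Q 5 + s 6%N *: pt Q 6 + s 7%N *: pt Q 7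
  + s 8%N *: pt Q 8.
Proof. exact: sum_1_to_8. Qed.

Lemma pt_Y Q k : (0 < k <= 8)%N -> pt (Y Q) k = Yrow Q k.
Proof. by case/andP=> k_gt0 k_le8; rewrite /pt /Y inordK ?prednK // ltn_predL. Qed.

Lemma nu_auxE p first cur r : nu_aux p first cur r =
  \sum_(ij <- zip (cur :: r) (rcons r first)) cross (pt p ij.1) (pt p ij.2).
Proof.
elim: r cur => [|y r IHr] cur /=; first by rewrite big_seq1.
by rewrite big_cons IHr.
Qed.

Definition cyc_sum (g : vec -> vec -> R) p (s : seq nat) : R :=
  if s is i :: r then \sum_(ij <- zip (i :: r) (rcons r i)) g (pt p ij.1) (pt p ij.2)
  else 0.

Section CoordinateFunctional.
Variables (f : vec -> R) (g : vec -> vec -> R).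
Hypotheses (fD : {morph f : a b / a + b}) (fZ : forall (k : R) a, f (k *: a) = k * f a).
Hypothesis f_cross : forall a b, f (cross a b) = g a b.

Lemma coord0 : f 0 = 0.
Proof. by rewrite -(scale0r 0) fZ mul0r. Qed.

Lemma coord_nu p s : f (nu p s) = cyc_sum g p s.
Proof.
case: s => [|i r] /=; first exact: coord0.
by rewrite nu_auxE (big_morph f fD coord0); under eq_bigr do rewrite f_cross.
Qed.

Lemma coord_pt_Y Q k l1 l2 l3 : (0 < k <= 8)%N ->
  Yrow Q k = (1/2) *: (nu Q l1 + nu Q l2 + nu Q l3) ->
  f (pt (Y Q) k) = 1/2 * (cyc_sum g Q l1 + cyc_sum g Q l2 + cyc_sum g Q l3).
Proof. by move=> k_range YQk; rewrite pt_Y // YQk fZ !fD !coord_nu. Qed.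

Lemma coord_mode s Q : f (mode s Q) = s 1%N * f (pt Q 1) + s 2%N * f (pt Q 2)
  + s 3%N * f (pt Q 3) + s 4%N * f (pt Q 4) + s 5%N * f (pt Q 5)
  + s 6%N * f (pt Q 6) + s 7%N * f (pt Q 7) + s 8%N * f (pt Q 8).
Proof. by rewrite modeE !fD !fZ. Qed.
End CoordinateFunctional.

Ltac coords_modes := apply: vec_eq;
  rewrite ?coordE ?(coord_mode cxD cxZ) ?(coord_mode cyD cyZ) ?(coord_mode czD czZ).

Lemma eq_mode s Q Q' : (forall i, Q i = Q' i) -> mode s Q = mode s Q'.
Proof. by move=> eqQ; apply: eq_bigr => k _; rewrite /pt eqQ. Qed.

Lemma modeZ s (l : R) Q : mode s (fun i => l *: Q i) = l *: mode s Q.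
Proof. by rewrite /mode scaler_sumr; apply: eq_bigr => k _; rewrite /pt !scalerA mulrC. Qed.

Lemma mode_affine s (mu : R) c Q : \sum_(1 <= k < 9) s k = 0 ->
  mode s (fun i => mu *: Q i + c) = mu *: mode s Q.
Proof.
move=> s0; rewrite -modeZ /mode.
under eq_bigr do rewrite /pt scalerDr.
by rewrite big_split /= -scaler_suml s0 scale0r addr0.
Qed.

Lemma sign_sums0 : [/\ \sum_(1 <= k < 9) su k = 0, \sum_(1 <= k < 9) sv k = 0,
  \sum_(1 <= k < 9) sw k = 0 & [/\ \sum_(1 <= k < 9) suv k = 0,
  \sum_(1 <= k < 9) svw k = 0, \sum_(1 <= k < 9) suw k = 0
  & \sum_(1 <= k < 9) suvw k = 0]].
Proof.
by rewrite /suv /svw /suw /suvw !sum_1_to_8 /=; split; [..| split]; ring.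
Qed.

Lemma mode_inversion Q k : (0 < k <= 8)%N ->
  pt Q k = 8^-1 *: mode (fun=> 1) Q + su k *: (8^-1 *: mode su Q)
    + sv k *: (8^-1 *: mode sv Q) + sw k *: (8^-1 *: mode sw Q)
    + suv k *: (8^-1 *: mode suv Q) + svw k *: (8^-1 *: mode svw Q)
    + suw k *: (8^-1 *: mode suw Q) + suvw k *: (8^-1 *: mode suvw Q).
Proof.
case: k => [|[|[|[|[|[|[|[|[|k]]]]]]]]] // _; coords_modes; rewrite /suv /svw /suw /suvw /=.
all: by field.
Qed.

(* The index lists of each row are read off Yrow by unifying with erefl.  Rows
   are expanded one at a time because rewriting inside the fully unfolded
   field is prohibitively slow. *)
Ltac coords_Y fD fZ fX :=
  rewrite (coord_pt_Y fD fZ fX (k:=1) erefl erefl) (coord_pt_Y fD fZ fX (k:=2) erefl erefl)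
    (coord_pt_Y fD fZ fX (k:=3) erefl erefl) (coord_pt_Y fD fZ fX (k:=4) erefl erefl)
    (coord_pt_Y fD fZ fX (k:=5) erefl erefl) (coord_pt_Y fD fZ fX (k:=6) erefl erefl)
    (coord_pt_Y fD fZ fX (k:=7) erefl erefl) (coord_pt_Y fD fZ fX (k:=8) erefl erefl).

(* The entries of the index lists in Yrow are parsed in ring_scope, i.e. as
   n%:R : nat, hence the normalisation by natn. *)
Ltac modes_Y_by_coords :=
  coords_modes;
  [coords_Y cxD cxZ cx_cross | coords_Y cyD cyZ cy_cross | coords_Y czD czZ cz_cross];
  rewrite /cyc_sum unlock /suv /svw /suw /suvw /= !natn -[1%R : nat]/1%N; field; done.

Lemma mode_Y_u Q : mode su (Y Q) = cross (mode sv Q) (mode sw Q).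
Proof. modes_Y_by_coords. Qed.
Lemma mode_Y_v Q : mode sv (Y Q) = cross (mode sw Q) (mode su Q).
Proof. modes_Y_by_coords. Qed.
Lemma mode_Y_w Q : mode sw (Y Q) = cross (mode su Q) (mode sv Q).
Proof. modes_Y_by_coords. Qed.
Lemma mode_Y_uv Q : mode suv (Y Q) = 0.
Proof. modes_Y_by_coords. Qed.
Lemma mode_Y_vw Q : mode svw (Y Q) = 0.
Proof. modes_Y_by_coords. Qed.
Lemma mode_Y_uw Q : mode suw (Y Q) = 0.
Proof. modes_Y_by_coords. Qed.
Lemma mode_Y_uvw Q : mode suvw (Y Q) = 0.
Proof. modes_Y_by_coords. Qed.

Definition mixed_modes0 Q :=
  [/\ mode suv Q = 0, mode svw Q = 0, mode suw Q = 0 & mode suvw Q = 0].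

Lemma pt_of_modes Q k : (0 < k <= 8)%N -> mixed_modes0 Q ->
  pt Q k = 8^-1 *: mode (fun=> 1) Q + su k *: (8^-1 *: mode su Q)
    + sv k *: (8^-1 *: mode sv Q) + sw k *: (8^-1 *: mode sw Q).
Proof.
by move=> k_range [uv0 vw0 uw0 uvw0]; rewrite mode_inversion // uv0 vw0 uw0 uvw0 !scaler0 !addr0.
Qed.

Lemma eigen_modes Q (l : R) : l != 0 -> (forall i, Y Q i = l *: Q i) ->
  mixed_modes0 Q /\ cross_frame l (mode su Q) (mode sv Q) (mode sw Q).
Proof.
move=> l0 eigQ.
have modeYQ s : mode s (Y Q) = l *: mode s Q by rewrite (eq_mode s eigQ) modeZ.
have vanish s : mode s (Y Q) = 0 -> mode s Q = 0.
  by rewrite modeYQ; apply: scaler_eq0_cancel.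
split; first by split; apply: vanish;
  [exact: mode_Y_uv | exact: mode_Y_vw | exact: mode_Y_uw | exact: mode_Y_uvw].
by split; rewrite -modeYQ ?mode_Y_u ?mode_Y_v ?mode_Y_w.
Qed.

Lemma optimal_modes p : Y_optimal p ->
  exists2 k : R, k != 0 & mixed_modes0 p /\ cross_frame k (mode su p) (mode sv p) (mode sw p).
Proof.
move=> [_ [mu [c [l [mu_gt0 [l0 eigq]]]]]].
have mu0 : mu != 0 by rewrite gt_eqF.
have [su0 sv0 sw0 [suv0 svw0 suw0 suvw0]] := sign_sums0.
have [[] ] := eigen_modes (Q := fun i => mu *: p i + c) l0 eigq.
rewrite !mode_affine // => uv0 vw0 uw0 uvw0 frame.
exists (l / mu); first by rewrite mulf_neq0 ?invr_eq0.
split; last exact: cross_frameZ.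
by split; apply: (scaler_eq0_cancel mu0).
Qed.

Lemma cube_of_modes p (k : R) : k != 0 -> (exists i j, p i != p j) ->
  mixed_modes0 p -> cross_frame k (mode su p) (mode sv p) (mode sw p) -> is_cube p.
Proof.
move=> k0 [i [j pij]] mixed0 frame.
have [uv vw uw uu vv] := cross_frame_orthogonal k0 frame.
have inv8 : (8^-1 : R) != 0 by rewrite invr_eq0 pnatr_eq0.
exists (8^-1 *: mode (fun=> 1) p), (8^-1 *: mode su p), (8^-1 *: mode sv p), (8^-1 *: mode sw p).
split; last first.
  rewrite !dotZl !dotZr uv vw uw uu vv !mulr0; do !split=> //;
  by rewrite pt_of_modes // /su /sv /sw /= ?scaleN1r ?scale1r.
rewrite scaler_eq0 negb_or inv8 /=; apply: contra pij => /eqP U0.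
have [V0 W0] := cross_frame_degenerate k0 frame U0.
have pt_center m : (m < 8)%N -> p (inord m) = 8^-1 *: mode (fun=> 1) p.
  by move=> lt_m8; rewrite -[p _]/(pt p m.+1) pt_of_modes // U0 V0 W0 !scaler0 !addr0.
by rewrite -(inord_val i) -(inord_val j) !pt_center.
Qed.
End Hexahedron.

Theorem mainTheorem10 (R : realType) (p : 'I_8 -> 'rV[R]_3) :
  Y_optimal p -> is_cube p.
Proof.
move=> opt; have [k k0 [mixed0 frame]] := optimal_modes opt.
by apply: cube_of_modes k0 _ mixed0 frame; case: opt.
Qed.
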